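(* In a non-degenerate RiFle assignment game, for every stable payoff $(\bar u,\bar v)$ there is exactly one matching $\mu$ such that $(\bar u,\bar v;\mu)$ is a stable outcome.
   Context: A RiFle assignment game consists of two disjoint sets of agents $P=\{p_1,\dots,p_n\}$ and $Q=\{q_1,\dots,q_n\}$, a pair of nonnegative real numbers $(\beta_{ij},\gamma_{ij})$ for every pair $(p_i,q_j)\in P\times Q$ (write $\alpha_{ij}=\beta_{ij}+\gamma_{ij}$), and a designation of every agent as rigid or flexible. Let $\mathcal R$ be the set of pairs with at least one rigid agent and $\mathcal F$ the set of pairs with both agents flexible. An outcome $(\bar u,\bar v;\mu)$ consists of a matching $\mu$ between $P$ and $Q$ (write $p_i\stackrel{\mu}{\longleftrightarrow} q_j$) and payoff vectors $\bar u,\bar v\in\mathbb R^n$. It is feasible if: (1) $u_i\ge0$, $v_j\ge0$; (2) if a rigid $p_i$ is matched to $q_j$ then $u_i=\beta_{ij}$ and, if $q_j$ is flexible, $v_j\ge\gamma_{ij}$; symmetrically for a rigid $q_j$ matched to $p_i$: $v_j=\gamma_{ij}$ and, if $p_i$ is flexible, $u_i\ge\beta_{ij}$; (3) $\sum_iu_i+\sum_jv_j=\sum_{p_i\stackrel{\mu}{\longleftrightarrow}q_j}\alpha_{ij}$. It is stable if feasible and $u_i+v_j\ge\alpha_{ij}$ for $(p_i,q_j)\in\mathcal F$ and ($u_i\ge\beta_{ij}$ or $v_j\ge\gamma_{ij}$) for $(p_i,q_j)\in\mathcal R$. A payoff $(\bar u,\bar v)$ is stable if $(\bar u,\bar v;\mu)$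 is a stable outcome for some matching $\mu$. Reservation prices are modeled by rigid dummy agents; for the following definition an agent left unmatched by a matching is regarded as matched to a rigid dummy agent (whose prescribed share for him is his reservation price). Given a coalition $C\subseteq P\cup Q$ and a matching $\mu$, the total payoff to $C$ under $\mu$ is forced if every pair matched under $\mu$ with one agent in $C$ and the other outside $C$ contains a rigid agent; the forced payoff is then $\sum_{p_i\in C,\ p_i\stackrel{\mu}{\longleftrightarrow}q_j}\beta_{ij}+\sum_{q_j\in C,\ p_i\stackrel{\mu}{\longleftrightarrow}q_j}\gamma_{ij}$. The game is non-degenerate if for any two matchings $\mu,\mu'$: whenever $C$ is a minimal coalition such that the payoff to $C$ is forced under both $\mu$ and $\mu'$, and the two forced payoffs are equal, then $\mu$ and $\mu'$ coincide on $C$. *)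

From HB Require Import structures.
From mathcomp Require Import all_boot all_order fingroup perm all_algebra.
Set Implicit Arguments. Unset Strict Implicit. Unset Printing Implicit Defensive.
Import Order.TTheory GRing.Theory Num.Theory.
Local Open Scope ring_scope.

(* A RiFle assignment game with n agents on each side:
   agents p_i, q_j are indexed by 'I_n;
   beta i j, gamma i j are the shares of p_i and q_j for the pair (p_i,q_j);
   rigP i (resp. rigQ j) is true iff p_i (resp. q_j) is rigid.
   A matching is a bijection mu : P -> Q, given as a permutation of 'I_n
   (p_i is matched to q_(mu i)). *)

Section RiFle.
Variables (R : realFieldType) (n : nat).
Variables (beta gamma : 'I_n -> 'I_n -> R) (rigP rigQ : 'I_n -> bool).

Definition alpha (i j : 'I_n) : R := beta i j + gamma i j.

Definition flex_pair (i j : 'I_n) : bool := ~~ rigP i && ~~ rigQ j.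

Definition feasible (u v : 'I_n -> R) (mu : {perm 'I_n}) : Prop :=
  [/\ (forall i, 0 <= u i), (forall j, 0 <= v j),
      (forall i, rigP i -> u i = beta i (mu i) /\
                           (~~ rigQ (mu i) -> gamma i (mu i) <= v (mu i))),
      (forall i, rigQ (mu i) -> v (mu i) = gamma i (mu i) /\
                           (~~ rigP i -> beta i (mu i) <= u i)) &
      \sum_i u i + \sum_j v j = \sum_i alpha i (mu i)].

Definition stable_outcome (u v : 'I_n -> R) (mu : {perm 'I_n}) : Prop :=
  feasible u v mu /\
  (forall i j, if flex_pair i j then alpha i j <= u i + v j
               else (beta i j <= u i) || (gamma i j <= v j)).

Definition stable_payoff (u v : 'I_n -> R) : Prop :=
  exists mu : {perm 'I_n}, stable_outcome u v mu.

(* A coalition C ⊆ P ∪ Q is a pair (CP, CQ) of index sets. *)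
Definition forced (CP CQ : {set 'I_n}) (mu : {perm 'I_n}) : bool :=
  [forall i, ((i \in CP) != (mu i \in CQ)) ==> (rigP i || rigQ (mu i))].

Definition forced_payoff (CP CQ : {set 'I_n}) (mu : {perm 'I_n}) : R :=
  \sum_(i in CP) beta i (mu i) + \sum_(j in CQ) gamma ((mu^-1)%g j) j.

Definition forced_both (mu mu' : {perm 'I_n}) (CP CQ : {set 'I_n}) : bool :=
  forced CP CQ mu && forced CP CQ mu'.

Definition minimal_forced (mu mu' : {perm 'I_n}) (CP CQ : {set 'I_n}) : Prop :=
  [/\ (CP != set0) || (CQ != set0), forced_both mu mu' CP CQ &
      forall DP DQ : {set 'I_n}, DP \subset CP -> DQ \subset CQ ->
        (DP != set0) || (DQ != set0) -> forced_both mu mu' DP DQ ->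
        DP = CP /\ DQ = CQ].

Definition non_degenerate : Prop :=
  forall (mu mu' : {perm 'I_n}) (CP CQ : {set 'I_n}),
    minimal_forced mu mu' CP CQ ->
    forced_payoff CP CQ mu = forced_payoff CP CQ mu' ->
    (forall i, i \in CP -> mu i = mu' i) /\
    (forall j, j \in CQ -> (mu^-1)%g j = (mu'^-1)%g j).

End RiFle.

(* In a stable outcome every matched pair splits exactly its worth alpha: each
   pair gets at least alpha by stability and feasibility, and the totals agree.
   A pair containing a rigid agent even gets exactly (beta, gamma).  Hence, for
   a coalition whose payoff is forced under a stable matching, the forced payoff
   is the total payoff of the coalition, which depends only on (u, v).  Given
   two stable matchings mu, mu' for (u, v) and an agent p_i, the intersection of
   all coalitions containing p_i whose payoff is forced under both matchings is
   again such a coalition, and it is minimal, because forced coalitions are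
   closed under differences.  Non-degeneracy then forces mu i = mu' i. *)

From HB Require Import structures.
From mathcomp Require Import all_boot all_order fingroup perm all_algebra.
Import Order.TTheory GRing.Theory Num.Theory.
Local Open Scope ring_scope.
Set Implicit Arguments. Unset Strict Implicit.

Section Forced.
Variables (n : nat) (rigP rigQ : 'I_n -> bool).

Lemma forcedP (CP CQ : {set 'I_n}) (mu : {perm 'I_n}) :
  reflect (forall k, ~~ (rigP k || rigQ (mu k)) -> (k \in CP) = (mu k \in CQ))
          (forced rigP rigQ CP CQ mu).
Proof.
apply: (iffP forallP) => [H k flex | H k].
  by move: (H k); case: eqP => // _; rewrite (negPf flex).
apply/implyP => differ; apply/negPn/negP => flex.
by rewrite (H k flex) eqxx in differ.
Qed.

Lemma forced_setD (mu : {perm 'I_n}) (AP AQ BP BQ : {set 'I_n}) :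
  forced rigP rigQ AP AQ mu -> forced rigP rigQ BP BQ mu ->
  forced rigP rigQ (AP :\: BP) (AQ :\: BQ) mu.
Proof.
move=> /forcedP HA /forcedP HB; apply/forcedP => k flex.
by rewrite !inE HA // HB.
Qed.

Lemma forced_bigcap (I : finType) (P : pred I) (FP FQ : I -> {set 'I_n})
    (mu : {perm 'I_n}) :
  (forall x, P x -> forced rigP rigQ (FP x) (FQ x) mu) ->
  forced rigP rigQ (\bigcap_(x | P x) FP x) (\bigcap_(x | P x) FQ x) mu.
Proof.
move=> HF; apply/forcedP => k flex.
apply/bigcapP/bigcapP => H x Px; have /forcedP HFx := HF x Px.
  by rewrite -HFx // H.
by rewrite HFx // H.
Qed.

Lemma forced_both_setD (mu mu' : {perm 'I_n}) (AP AQ BP BQ : {set 'I_n}) :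
  forced_both rigP rigQ mu mu' AP AQ -> forced_both rigP rigQ mu mu' BP BQ ->
  forced_both rigP rigQ mu mu' (AP :\: BP) (AQ :\: BQ).
Proof. by move=> /andP[A A'] /andP[B B']; rewrite /forced_both !forced_setD. Qed.

Lemma minimal_forced_exists (mu mu' : {perm 'I_n}) (i : 'I_n) :
  exists CP CQ : {set 'I_n}, i \in CP /\ minimal_forced rigP rigQ mu mu' CP CQ.
Proof.
pose S := [pred D : {set 'I_n} * {set 'I_n} |
            forced_both rigP rigQ mu mu' D.1 D.2 && (i \in D.1)].
pose KP := \bigcap_(D | S D) D.1; pose KQ := \bigcap_(D | S D) D.2.
have iK : i \in KP by apply/bigcapP => D /andP[].
have fbK : forced_both rigP rigQ mu mu' KP KQ.
  by apply/andP; split; apply: forced_bigcap => D /andP[/andP[]].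
have K_sub DP DQ : forced_both rigP rigQ mu mu' DP DQ -> i \in DP ->
    KP \subset DP /\ KQ \subset DQ.
  move=> fD iD; have SD : S (DP, DQ) by apply/andP.
  by split; apply: (bigcap_inf (DP, DQ)).
exists KP, KQ; split=> //; split=> //.
  by apply/orP; left; apply/set0Pn; exists i.
move=> DP DQ sP sQ ne fD.
have [iD | iND] := boolP (i \in DP).
  have [s1 s2] := K_sub _ _ fD iD.
  by split; apply/eqP; rewrite eqEsubset ?s1 ?s2 ?sP ?sQ.
have iKD : i \in KP :\: DP by rewrite inE iND iK.
have [s1 s2] := K_sub _ _ (forced_both_setD fbK fD) iKD.
exfalso; case/orP: ne => /set0Pn[k kD].
  by have := subsetP s1 k (subsetP sP k kD); rewrite inE kD.
by have := subsetP s2 k (subsetP sQ k kD); rewrite inE kD.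
Qed.

End Forced.

Section StableOutcome.
Variables (R : realFieldType) (n : nat).
Variables (beta gamma : 'I_n -> 'I_n -> R) (rigP rigQ : 'I_n -> bool).
Variables (u v : 'I_n -> R) (mu : {perm 'I_n}).
Hypothesis stable_mu : stable_outcome beta gamma rigP rigQ u v mu.

Lemma stable_matched_ge i : alpha beta gamma i (mu i) <= u i + v (mu i).
Proof.
have [[_ _ HP HQ _] Hs] := stable_mu; rewrite /alpha.
case rP: (rigP i); case rQ: (rigQ (mu i)).
- by have [-> _] := HP i rP; have [-> _] := HQ i rQ.
- by have [-> H] := HP i rP; rewrite lerD2l H ?rQ.
- by have [-> H] := HQ i rQ; rewrite lerD2r H ?rP.
- by have := Hs i (mu i); rewrite /flex_pair rP rQ.
Qed.

Lemma stable_matched_eq i : u i + v (mu i) = alpha beta gamma i (mu i).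
Proof.
have [[_ _ _ _ Hsum] _] := stable_mu.
have surplus0 : \sum_k (u k + v (mu k) - alpha beta gamma k (mu k)) = 0.
  rewrite sumrB big_split /= -Hsum.
  by rewrite [\sum_j v j](reindex_inj (@perm_inj _ mu)) subrr.
have surplus_ge0 k : true -> 0 <= u k + v (mu k) - alpha beta gamma k (mu k).
  by rewrite subr_ge0 stable_matched_ge.
by apply/eqP; rewrite -subr_eq0; apply/eqP; apply: (psumr_eq0P surplus_ge0).
Qed.

Lemma stable_rigid_matched i : rigP i || rigQ (mu i) ->
  u i = beta i (mu i) /\ v (mu i) = gamma i (mu i).
Proof.
have [[_ _ HP HQ _] _] := stable_mu; have := stable_matched_eq i; rewrite /alpha.
move=> split_eq /orP[rP | rQ].
  have [uE _] := HP i rP; rewrite uE in split_eq *.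
  by rewrite (addrI _ split_eq).
have [vE _] := HQ i rQ; rewrite vE in split_eq *.
by rewrite (addIr _ split_eq).
Qed.

Lemma forced_payoff_stable (CP CQ : {set 'I_n}) :
  forced rigP rigQ CP CQ mu ->
  forced_payoff beta gamma CP CQ mu = \sum_(i in CP) u i + \sum_(j in CQ) v j.
Proof.
move=> /forcedP Hf; rewrite /forced_payoff.
rewrite [\sum_(i in CP) beta _ _]big_mkcond [\sum_(i in CP) u _]big_mkcond.
rewrite [\sum_(j in CQ) gamma _ _]big_mkcond [\sum_(j in CQ) v _]big_mkcond.
rewrite [\sum_j (if _ then gamma _ _ else _)](reindex_inj (@perm_inj _ mu)).
rewrite [\sum_j (if _ then v _ else _)](reindex_inj (@perm_inj _ mu)) /=.
rewrite -!big_split; apply: eq_bigr => i _ /=; rewrite permK.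
have [rig | flex] := boolP (rigP i || rigQ (mu i)).
  by have [-> ->] := stable_rigid_matched rig.
by rewrite (Hf i flex); case: (mu i \in CQ); rewrite ?addr0 ?stable_matched_eq.
Qed.

End StableOutcome.

Theorem proposition4 (R : realFieldType) (n : nat)
    (beta gamma : 'I_n -> 'I_n -> R) (rigP rigQ : 'I_n -> bool) :
  (forall i j, 0 <= beta i j) -> (forall i j, 0 <= gamma i j) ->
  non_degenerate beta gamma rigP rigQ ->
  forall u v : 'I_n -> R,
    stable_payoff beta gamma rigP rigQ u v ->
    exists! mu : {perm 'I_n}, stable_outcome beta gamma rigP rigQ u v mu.
Proof.
move=> _ _ nondeg u v [mu stable_mu]; exists mu; split=> // mu' stable_mu'.
apply/permP => i.
have [CP [CQ [iC minC]]] := minimal_forced_exists rigP rigQ mu mu' i.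
have [_ /andP[f f'] _] := minC.
have same_payoff :
    forced_payoff beta gamma CP CQ mu = forced_payoff beta gamma CP CQ mu'.
  by rewrite (forced_payoff_stable stable_mu f) (forced_payoff_stable stable_mu' f').
by have [-> //] := nondeg _ _ _ _ minC same_payoff.
Qed.
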